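(* For every allocation $\mathcal{E}=(E_1,\dots,E_M)\in\mathfrak{E}$ let $V(\mathcal{E})$ denote the optimal value of the parametric problem $\mathcal{P}(\mathcal{E})$ described in the context. Then $V$ is convex on $\mathfrak{E}$: for all $\lambda\in[0,1]$ and all $\mathcal{E}_1,\mathcal{E}_2\in\mathfrak{E}$, $V(\lambda\mathcal{E}_1+(1-\lambda)\mathcal{E}_2)\le\lambda V(\mathcal{E}_1)+(1-\lambda)V(\mathcal{E}_2)$.
   Context: Data: integers $N\ge1$, $M\ge1$, $T>0$, $E>0$, constants $\alpha>0,\beta$, $L<U$, $x_{i0}\in[L,U]$ ($i\in[N]:=\{1,\dots,N\}$), a price $\pi:[0,T]\to\mathbb{R}$, a constant ambient temperature $\hat{x}>U$. Let $0=\tau_0<\tau_1<\dots<\tau_M=T$ be the partition of $[0,T]$ into the subintervals on which $\pi$ is monotone, $T_j:=\tau_j-\tau_{j-1}$. Let $\overline{u}:=\frac\alpha\beta(\hat{x}-U)$, $\underline{u}:=\frac\alpha\beta(\hat{x}-L)$, $t^0:=\frac1\alpha\log\frac{\hat{x}-L}{\hat{x}-U}$, $t^1:=\frac1\alpha\log\frac{U-\hat{x}+\beta/\alpha}{L-\hat{x}+\beta/\alpha}$, $\overline{E}_j:=N\overline{u}[T_j-t^0]^+$, $\underline{E}_j:=N\{\min(t^1,T_j)+\underline{u}[T_j-t^1]^+\}$, where $[s]^+=\max\{0,s\}$. The admissible allocations are $\mathfrak{E}:=\{(E_1,\dots,E_M)\in\mathbb{R}^M_+:\sum_jE_j=E,\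 E_j\in[\overline{E}_j,\underline{E}_j]\ \forall j\}$. Problem $\mathcal{P}(\mathcal{E})$: over measurable $u_i:[0,T]\to[0,1]$, minimize $J(\mathbf{u})=\int_0^T\pi(t)\sum_{i=1}^Nu_i(t)dt$ subject to $\dot{x}_i=-\alpha(x_i-\hat{x})-\beta u_i$ a.e., $x_i(0)=x_{i0}$, $L\le x_i(t)\le U$ for all $t$ ($i\in[N]$), $\dot{x}_{N+1}=\sum_iu_i$ a.e., $x_{N+1}(0)=0$, and $x_{N+1}(\tau_j)=E_1+\dots+E_j$ for $j=1,\dots,M$. $V(\mathcal{E})$ is the minimum (infimum) of $J$ over feasible controls. *)

From HB Require Import structures.
From mathcomp Require Import all_boot all_order all_algebra.
From mathcomp Require Import all_classical all_reals all_analysis.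
Unset Printing Implicit Defensive.
Import Order.TTheory GRing.Theory Num.Theory.
Import numFieldNormedType.Exports.
Local Open Scope classical_set_scope.
Local Open Scope ring_scope.

Section Defs.
Context {R : realType}.
Local Notation mu := (@lebesgue_measure R).

(* Indices j = 1..M of the paper are j : 'I_M (paper index j+1);
   the partition points are tau 0, ..., tau M. *)

(* A feasible control for P(Ealloc): measurable u_i : [0,T] -> [0,1],
   with an (absolutely continuous / Caratheodory) state x_i given in integral
   form, staying in [L,U], and the energy state x_{N+1}(t) = int_0^t sum_i u_i
   meeting the cumulative targets at tau_1, ..., tau_M. *)
Definition feasible (N M : nat) (T alpha beta L U xhat : R)
    (x0 : 'I_N -> R) (tau : nat -> R) (Ealloc : 'I_M -> R)
    (u : 'I_N -> R -> R) : Prop :=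
  (forall i, measurable_fun `[0, T] (u i)) /\
  (forall i t, t \in `[0, T] -> 0 <= u i t <= 1) /\
  (exists x : 'I_N -> R -> R,
     (forall i, {within `[0, T], continuous (x i)}) /\
     (forall i t, t \in `[0, T] ->
        (x i t)%:E = (x0 i)%:E +
          (\int[mu]_(s in `[0%R, t]) (- alpha * (x i s - xhat) - beta * u i s)%:E)%E) /\
     (forall i t, t \in `[0, T] -> L <= x i t <= U)) /\
  (forall j : 'I_M,
     (\int[mu]_(s in `[0%R, tau j.+1]) (\sum_(i < N) u i s)%:E)%E
       = (\sum_(k < M | (k <= j)%N) Ealloc k)%:E).

Definition cost (N : nat) (T : R) (pi : R -> R) (u : 'I_N -> R -> R) : \bar R :=
  (\int[mu]_(t in `[0%R, T]) (pi t * \sum_(i < N) u i t)%:E)%E.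

Definition value (N M : nat) (T alpha beta L U xhat : R)
    (x0 : 'I_N -> R) (pi : R -> R) (tau : nat -> R) (Ealloc : 'I_M -> R) : \bar R :=
  ereal_inf [set z | exists u, feasible N M T alpha beta L U xhat x0 tau Ealloc u
                              /\ z = cost N T pi u].

Definition posp (s : R) : R := Num.max 0 s.

Definition ubar (alpha beta U xhat : R) : R := alpha / beta * (xhat - U).
Definition uund (alpha beta L xhat : R) : R := alpha / beta * (xhat - L).
Definition t0 (alpha L U xhat : R) : R := ln ((xhat - L) / (xhat - U)) / alpha.
Definition t1 (alpha beta L U xhat : R) : R :=
  ln ((U - xhat + beta / alpha) / (L - xhat + beta / alpha)) / alpha.

Definition Tlen (M : nat) (tau : nat -> R) (j : 'I_M) : R := tau j.+1 - tau j.

Definition Elow (N M : nat) (alpha beta L U xhat : R) (tau : nat -> R) (j : 'I_M) : R :=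
  N%:R * ubar alpha beta U xhat * posp (Tlen M tau j - t0 alpha L U xhat).

Definition Eup (N M : nat) (alpha beta L U xhat : R) (tau : nat -> R) (j : 'I_M) : R :=
  N%:R * (Num.min (t1 alpha beta L U xhat) (Tlen M tau j)
          + uund alpha beta L xhat * posp (Tlen M tau j - t1 alpha beta L U xhat)).

Definition admissible (N M : nat) (Etot alpha beta L U xhat : R) (tau : nat -> R)
    (Ealloc : 'I_M -> R) : Prop :=
  (forall j, 0 <= Ealloc j) /\ \sum_(j < M) Ealloc j = Etot /\
  (forall j, Elow N M alpha beta L U xhat tau j <= Ealloc j
             <= Eup N M alpha beta L U xhat tau j).

End Defs.

From HB Require Import structures.
From mathcomp Require Import all_boot all_order all_algebra.
From mathcomp Require Import all_classical all_reals all_analysis.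
From mathcomp Require Import unstable ring lra measurable_realfun.
Set Implicit Arguments.
Unset Strict Implicit.
Unset Printing Implicit Defensive.
Import Order.TTheory GRing.Theory Num.Theory.
Import numFieldNormedType.Exports.
Local Open Scope classical_set_scope.
Local Open Scope ring_scope.

(* Proof idea: the state equation and the energy targets are affine in the
   control and the state, and the cost is linear in the control, so the convex
   combination of controls feasible for E1 and E2 is feasible for the combined
   allocation and has the combined cost.  Passing to infima needs the costs to
   be bounded below uniformly; this holds because a piecewise monotone price is
   measurable and bounded on [0, T]. *)

Section ereal_inf_convex.
Context {R : realType}.
Implicit Types (S : set (\bar R)) (B : R).

Lemma ereal_inf_ge S B : S `<=` EFin @` [set r | B <= r] -> (B%:E <= ereal_inf S)%E.
Proof. by move=> SB; apply: le_ereal_inf_tmp => _ /SB[r Br <-]; rewrite lee_fin. Qed.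

Lemma ereal_inf_fin_num S B :
  S `<=` EFin @` [set r | B <= r] -> S !=set0 -> ereal_inf S \is a fin_num.
Proof.
move=> SB [z Sz]; rewrite fin_numElt (lt_le_trans (ltNyr B) (ereal_inf_ge SB)) /=.
by apply: le_lt_trans (ereal_inf_lbound Sz) _; have [r _ <-] := SB z Sz; exact: ltry.
Qed.

Lemma ereal_inf_convex (S1 S2 S : set (\bar R)) (B lam : R) :
  0 < lam < 1 ->
  S1 `<=` EFin @` [set r | B <= r] -> S2 `<=` EFin @` [set r | B <= r] ->
  (forall r1 r2, S1 r1%:E -> S2 r2%:E -> S (lam * r1 + (1 - lam) * r2)%:E) ->
  (ereal_inf S <= lam%:E * ereal_inf S1 + (1 - lam)%:E * ereal_inf S2)%E.
Proof.
move=> /andP[lam0 lam1] S1B S2B S_mix.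
have lam'0 : 0 < 1 - lam by rewrite subr_gt0.
have scaled_inf_neqNy c S' : 0 <= c -> S' `<=` EFin @` [set r | B <= r] ->
    (c%:E * ereal_inf S' != -oo)%E.
  move=> c0 S'B; rewrite -lteNye; apply: lt_le_trans (lee_wpmul2l _ (ereal_inf_ge S'B)).
    by rewrite -EFinM ltNyr.
  by rewrite lee_fin.
(* An empty [S1] or [S2] makes the right-hand side +oo, the other term being
   finite or +oo. *)
have [->|/set0P S1n] := eqVneq S1 set0.
  by rewrite ereal_inf0 gt0_muley ?lte_fin // addye ?leey // scaled_inf_neqNy ?ltW.
have [->|/set0P S2n] := eqVneq S2 set0.
  by rewrite ereal_inf0 gt0_muley ?lte_fin // addey ?leey // scaled_inf_neqNy ?ltW.
have F1 := ereal_inf_fin_num S1B S1n; have F2 := ereal_inf_fin_num S2B S2n.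
rewrite -(fineK F1) -(fineK F2); apply/lee_addgt0Pr => e e0.
have [y1 S1r1 r1e] := lb_ereal_inf_adherent e0 F1; have [r1 _ er1] := S1B _ S1r1.
have [y2 S2r2 r2e] := lb_ereal_inf_adherent e0 F2; have [r2 _ er2] := S2B _ S2r2.
rewrite -er1 in S1r1 r1e; rewrite -er2 in S2r2 r2e.
apply: le_trans (ereal_inf_lbound (S_mix _ _ S1r1 S2r2)) _.
rewrite -(fineK F1) -EFinD lte_fin in r1e; rewrite -(fineK F2) -EFinD lte_fin in r2e.
rewrite -!EFinM -!EFinD lee_fin; nra.
Qed.

End ereal_inf_convex.

Lemma normr_between {R : realDomainType} (a x b : R) :
  a <= x <= b -> `|x| <= `|a| + `|b|.
Proof.
move=> /andP[ax xb]; rewrite ler_norml; apply/andP; split.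
  by have := ler_norm (- a); rewrite normrN; have := normr_ge0 b; lra.
by have := ler_norm b; have := normr_ge0 a; lra.
Qed.

Section integral_lin_comb.
Context d (T : measurableType d) {R : realType} (mu : {measure set T -> \bar R}).

Lemma integral_lin_comb (D : set T) (f g : T -> R) (a b : R) : measurable D ->
  mu.-integrable D (EFin \o f) -> mu.-integrable D (EFin \o g) ->
  (\int[mu]_(x in D) (a * f x + b * g x)%:E =
   a%:E * \int[mu]_(x in D) (f x)%:E + b%:E * \int[mu]_(x in D) (g x)%:E)%E.
Proof.
move=> mD If Ig; under eq_integral do rewrite EFinD !EFinM.
by rewrite integralD ?integralZl //; exact: integrableZl.
Qed.

End integral_lin_comb.

Section interval_integral.
Context {R : realType}.
Local Notation mu := (@lebesgue_measure R).

Lemma lebesgue_measure_itv_cc (a b : R) : a <= b -> mu `[a, b] = (b - a)%:E.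
Proof.
have := @lebesgue_measure_itv R `[a, b]; rewrite /= lte_fin => -> ab.
by case: ltgtP ab => // <-; rewrite subrr.
Qed.

Lemma integrable_itv_bounded (a b C : R) (f : R -> R) :
  measurable_fun `[a, b] f -> (forall x, x \in `[a, b] -> `|f x| <= C) ->
  mu.-integrable `[a, b] (EFin \o f).
Proof.
move=> mf fC; apply: measurable_bounded_integrable => //.
  have := @lebesgue_measure_itv R `[a, b]; rewrite /= => ->.
  by case: ifP => _; rewrite ?ltry// -EFinD ltry.
exists C; split; first by rewrite num_real.
by move=> C' CC' x /fC/le_lt_trans/(_ CC')/ltW.
Qed.

Lemma integral_itv_ge (a b C : R) (g : R -> R) : a <= b ->
  mu.-integrable `[a, b] (EFin \o g) ->
  (forall x, x \in `[a, b] -> `|g x| <= C) ->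
  exists2 r, - (C * (b - a)) <= r & r%:E = (\int[mu]_(x in `[a, b]) (g x)%:E)%E.
Proof.
move=> ab ig gC.
have C0 : 0 <= C by apply: le_trans (gC a _); rewrite // in_itv /= lexx ab.
have mg := measurable_int _ ig.
have F : (\int[mu]_(x in `[a, b]) (g x)%:E)%E \is a fin_num.
  exact: integrable_fin_num ig.
exists (fine (\int[mu]_(x in `[a, b]) (g x)%:E)%E); last by rewrite fineK.
have : (`|\int[mu]_(x in `[a, b]) (g x)%:E| <= (C * (b - a))%:E)%E.
  apply: le_trans (le_abse_integral _ _ mg) _ => //.
  rewrite EFinM -lebesgue_measure_itv_cc //; apply: integral_le_bound => //.
  by apply: aeW => x /gC; rewrite lee_fin.
by rewrite -(fineK F) lee_fin ler_norml => /andP[].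
Qed.

End interval_integral.

Section piecewise_monotonic.
Context {R : realType}.

Lemma monotonic_itv_measurable (a b : R) (f : R -> R) :
  a <= b -> monotonic `[a, b] f -> measurable_fun `[a, b] f.
Proof.
move=> ab fmono; pose c t := Num.max a (Num.min t b).
have c_itv t : c t \in `[a, b].
  by rewrite in_itv /= le_max lexx ge_max ab ge_min lexx orbT.
have c_id t : t \in `[a, b] -> c t = t.
  by rewrite in_itv /= => /andP[a_t t_b]; rewrite /c (min_idPl t_b) (max_idPr a_t).
have c_nd : {homo c : s t / s <= t} by move=> s t st; rewrite le_max2 // le_min2.
apply: (@eq_measurable_fun _ _ _ _ _ (f \o c)) => [t /set_mem /c_id /= -> //|].
case: fmono => f_mono.
  by apply: nondecreasing_measurable => // s t /c_nd; apply: f_mono.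
by apply: nonincreasing_measurable => // s t /c_nd; apply: f_mono.
Qed.

Lemma monotonic_itv_bounded (a b : R) (f : R -> R) : monotonic `[a, b] f ->
  forall t, t \in `[a, b] -> `|f t| <= `|f a| + `|f b|.
Proof.
move=> fmono t tab; have /andP[a_t t_b] : a <= t <= b by rewrite in_itv in tab.
have [ain bin] : a \in `[a, b] /\ b \in `[a, b].
  by rewrite !in_itv /= !lexx (le_trans a_t t_b).
case: fmono => f_mono; first by apply: normr_between; rewrite !f_mono.
by rewrite addrC; apply: normr_between; rewrite !f_mono.
Qed.

Lemma set_itv_cc_setU (a b c : R) : a <= b <= c ->
  `[a, c]%classic = `[a, b]%classic `|` `[b, c]%classic.
Proof.
move=> /andP[ab bc]; apply/seteqP; split => x /=; rewrite !in_itv /=.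
  by move=> /andP[ax xc]; have [xb|/ltW bx] := leP x b; [left|right]; apply/andP.
by case=> /andP[? ?]; apply/andP; split; lra.
Qed.

Variables (M : nat) (tau : nat -> R).
Hypothesis tau_nd : forall j, (j < M)%N -> tau j <= tau j.+1.

Lemma partition_le j k : (j <= k <= M)%N -> tau j <= tau k.
Proof.
move=> /andP[]; elim: k => [|k IHk]; first by rewrite leqn0 => /eqP->.
rewrite leq_eqVlt => /predU1P[->//|/IHk jk kM].
exact: le_trans (jk (ltnW kM)) (tau_nd kM).
Qed.

Lemma partition_ind (P : R -> R -> Prop) :
  P (tau 0%N) (tau 0%N) ->
  (forall a b c, a <= b <= c -> P a b -> P b c -> P a c) ->
  (forall j, (j < M)%N -> P (tau j) (tau j.+1)) -> P (tau 0%N) (tau M).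
Proof.
move=> P0 P_trans P_piece; suff : forall k, (k <= M)%N -> P (tau 0%N) (tau k) by apply.
elim=> // k IHk kM; apply: (P_trans _ (tau k)) (IHk (ltnW kM)) (P_piece k kM).
by rewrite partition_le ?leq0n ?(ltnW kM) ?tau_nd.
Qed.

Lemma piecewise_monotonic_measurable_bounded (f : R -> R) :
  (forall j, (j < M)%N -> monotonic `[tau j, tau j.+1] f) ->
  measurable_fun `[tau 0%N, tau M] f /\
  exists C, forall t, t \in `[tau 0%N, tau M] -> `|f t| <= C.
Proof.
move=> f_mono.
pose P (a b : R) :=
  measurable_fun `[a, b] f /\ exists C, forall t, t \in `[a, b] -> `|f t| <= C.
apply: (@partition_ind P) => [|a b c abc [mab [C1 fC1]] [mbc [C2 fC2]]|j jM].
- have single s : s \in `[tau 0%N, tau 0%N] -> s = tau 0%N.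
    by rewrite in_itv /= => /andP[? ?]; apply/eqP; rewrite eq_le; apply/andP.
  split; last by exists `|f (tau 0%N)| => t /single ->.
  by apply: monotonic_itv_measurable => //; left => s t /single -> /single ->.
- split; first by rewrite (set_itv_cc_setU abc); exact/measurable_funU.
  exists (Num.max C1 C2) => t tac; change (`[a, c]%classic t) in tac.
  move: tac; rewrite (set_itv_cc_setU abc) => -[/fC1|/fC2] ft.
    by rewrite le_max ft.
  by rewrite le_max ft orbT.
- split; first exact: monotonic_itv_measurable (tau_nd jM) (f_mono j jM).
  exists (`|f (tau j)| + `|f (tau j.+1)|).
  exact: monotonic_itv_bounded (f_mono j jM).
Qed.

End piecewise_monotonic.

Definition mix {X : Type} {R : pzRingType} (lam : R) (f g : X -> R) (x : X) : R :=
  lam * f x + (1 - lam) * g x.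

Section control_problem.
Context {R : realType}.
Local Notation mu := (@lebesgue_measure R).
Variables (N M : nat) (T alpha beta L U xhat : R) (x0 : 'I_N -> R) (tau : nat -> R).

Definition drift (x u : R -> R) (s : R) : R := - alpha * (x s - xhat) - beta * u s.

Lemma drift_mix lam x1 x2 u1 u2 s :
  drift (mix lam x1 x2) (mix lam u1 u2) s = mix lam (drift x1 u1) (drift x2 u2) s.
Proof. by rewrite /drift /mix; ring. Qed.

Lemma itv0_sub t : t \in `[0, T] -> `[0, t]%classic `<=` `[0, T]%classic.
Proof.
by rewrite in_itv /= => /andP[_ tT] s /=; rewrite !in_itv /= => /andP[-> /le_trans->].
Qed.

Lemma drift_integrable (x u : R -> R) :
  {within `[0, T], continuous x} -> measurable_fun `[0, T] u ->
  (forall t, t \in `[0, T] -> L <= x t <= U) ->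
  (forall t, t \in `[0, T] -> 0 <= u t <= 1) ->
  mu.-integrable `[0, T] (EFin \o drift x u).
Proof.
move=> cx u_meas xLU u01.
apply: (integrable_itv_bounded (C := `|alpha| * (`|L| + `|U| + `|xhat|) + `|beta|)).
  apply: measurable_funB; apply: measurable_funM => //; try exact: measurable_cst.
  apply: measurable_funB; last exact: measurable_cst.
  exact: subspace_continuous_measurable_fun cx.
move=> s sT; have /andP[u0 u1] := u01 s sT.
apply: le_trans (ler_normB _ _) _; rewrite !normrM normrN; apply: lerD.
  rewrite ler_wpM2l //; apply: le_trans (ler_normB _ _) _.
  by rewrite lerD2r normr_between ?xLU.
by rewrite ler_piMr // ger0_norm.
Qed.

Lemma state_mix (lam xi0 : R) (x1 x2 u1 u2 : R -> R) t : t \in `[0, T] ->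
  mu.-integrable `[0, T] (EFin \o drift x1 u1) ->
  mu.-integrable `[0, T] (EFin \o drift x2 u2) ->
  (x1 t)%:E = (xi0%:E + \int[mu]_(s in `[0%R, t]) (drift x1 u1 s)%:E)%E ->
  (x2 t)%:E = (xi0%:E + \int[mu]_(s in `[0%R, t]) (drift x2 u2 s)%:E)%E ->
  (mix lam x1 x2 t)%:E =
    (xi0%:E + \int[mu]_(s in `[0%R, t]) (drift (mix lam x1 x2) (mix lam u1 u2) s)%:E)%E.
Proof.
move=> tT I1 I2 e1 e2; have sub := itv0_sub tT.
have I1t : mu.-integrable `[0, t] (EFin \o drift x1 u1) by apply: integrableS I1.
have I2t : mu.-integrable `[0, t] (EFin \o drift x2 u2) by apply: integrableS I2.
have F1 : (\int[mu]_(s in `[0%R, t]) (drift x1 u1 s)%:E)%E \is a fin_num.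
  exact: integrable_fin_num I1t.
have F2 : (\int[mu]_(s in `[0%R, t]) (drift x2 u2 s)%:E)%E \is a fin_num.
  exact: integrable_fin_num I2t.
under eq_integral do rewrite drift_mix.
have {}e1 : x1 t = xi0 + fine (\int[mu]_(s in `[0%R, t]) (drift x1 u1 s)%:E)%E.
  by apply: EFin_inj; rewrite EFinD fineK.
have {}e2 : x2 t = xi0 + fine (\int[mu]_(s in `[0%R, t]) (drift x2 u2 s)%:E)%E.
  by apply: EFin_inj; rewrite EFinD fineK.
rewrite integral_lin_comb // -(fineK F1) -(fineK F2) -!EFinM -!EFinD /mix e1 e2.
by congr EFin; ring.
Qed.

Lemma control_sum_bounded (u : 'I_N -> R) :
  (forall i, 0 <= u i <= 1) -> `|\sum_(i < N) u i| <= N%:R.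
Proof.
move=> u01; apply: le_trans (ler_norm_sum _ _ _) _.
rewrite -[N in X in _ <= X]card_ord -sumr_const; apply: ler_sum => i _.
by have /andP[u0 u1] := u01 i; rewrite ger0_norm.
Qed.

Lemma control_sum_integrable (u : 'I_N -> R -> R) :
  (forall i, measurable_fun `[0, T] (u i)) ->
  (forall i t, t \in `[0, T] -> 0 <= u i t <= 1) ->
  mu.-integrable `[0, T] (EFin \o fun s => \sum_(i < N) u i s).
Proof.
move=> u_meas u01; apply: (integrable_itv_bounded (C := N%:R)).
  exact: measurable_sum.
by move=> s sT; apply: control_sum_bounded => i; exact: u01.
Qed.

Lemma within_continuous_mix (A : set R) (lam : R) (f g : R -> R) :
  {within A, continuous f} -> {within A, continuous g} ->
  {within A, continuous (mix lam f g)}.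
Proof.
move=> cf cg t; apply: (@continuousD _ _ _ (fun t => lam * from_subspace A f t)
  (fun t => (1 - lam) * from_subspace A g t)).
  by apply: continuousM; [exact: cst_continuous | exact: cf].
by apply: continuousM; [exact: cst_continuous | exact: cg].
Qed.

Lemma feasible_mix (lam : R) (E1 E2 : 'I_M -> R) (u1 u2 : 'I_N -> R -> R) :
  0 <= lam <= 1 -> (forall j, (j < M)%N -> tau j.+1 \in `[0, T]) ->
  feasible N M T alpha beta L U xhat x0 tau E1 u1 ->
  feasible N M T alpha beta L U xhat x0 tau E2 u2 ->
  feasible N M T alpha beta L U xhat x0 tau (mix lam E1 E2)
    (fun i => mix lam (u1 i) (u2 i)).
Proof.
move=> /andP[lam0 lam1] tauT [u1_meas [u1_01 [[x1 [cx1 [ex1 x1LU]]] En1]]]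
  [u2_meas [u2_01 [[x2 [cx2 [ex2 x2LU]]] En2]]].
have mix_itv (a b y1 y2 : R) :
    a <= y1 <= b -> a <= y2 <= b -> a <= lam * y1 + (1 - lam) * y2 <= b.
  by move=> /andP[? ?] /andP[? ?]; apply/andP; split; nra.
split.
  move=> i.
  by apply: measurable_funD; apply: measurable_funM => //; exact: measurable_cst.
split; first by move=> i t tT; apply: mix_itv; [exact: u1_01 | exact: u2_01].
split.
  exists (fun i => mix lam (x1 i) (x2 i)); split; last split.
  - by move=> i; apply: within_continuous_mix.
  - move=> i t tT; apply: state_mix (ex1 i t tT) (ex2 i t tT) => //.
    + exact: drift_integrable (cx1 i) (u1_meas i) (x1LU i) (u1_01 i).
    + exact: drift_integrable (cx2 i) (u2_meas i) (x2LU i) (u2_01 i).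
  - by move=> i t tT; apply: mix_itv; [exact: x1LU | exact: x2LU].
move=> j; have sub := itv0_sub (tauT j (ltn_ord j)).
have I1 : mu.-integrable `[0, tau j.+1] (EFin \o fun s => \sum_(i < N) u1 i s).
  by apply: integrableS (control_sum_integrable u1_meas u1_01).
have I2 : mu.-integrable `[0, tau j.+1] (EFin \o fun s => \sum_(i < N) u2 i s).
  by apply: integrableS (control_sum_integrable u2_meas u2_01).
under eq_integral do rewrite big_split /= -!mulr_sumr.
rewrite integral_lin_comb // En1 En2 -!EFinM -!EFinD.
by rewrite /mix big_split /= -!mulr_sumr.
Qed.

Section cost.
Variables (pi : R -> R) (P : R).
Hypothesis pi_meas : measurable_fun `[0, T] pi.
Hypothesis pi_bounded : forall t, t \in `[0, T] -> `|pi t| <= P.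

Lemma cost_integrand_bounded (u : 'I_N -> R -> R) :
  (forall i t, t \in `[0, T] -> 0 <= u i t <= 1) ->
  forall t, t \in `[0, T] -> `|pi t * \sum_(i < N) u i t| <= P * N%:R.
Proof.
move=> u01 t tT; rewrite normrM ler_pM ?pi_bounded ?control_sum_bounded //.
by move=> i; exact: u01.
Qed.

Lemma cost_integrand_integrable (u : 'I_N -> R -> R) :
  (forall i, measurable_fun `[0, T] (u i)) ->
  (forall i t, t \in `[0, T] -> 0 <= u i t <= 1) ->
  mu.-integrable `[0, T] (EFin \o fun t => pi t * \sum_(i < N) u i t).
Proof.
move=> u_meas u01; apply: (integrable_itv_bounded (C := P * N%:R)).
  by apply: measurable_funM => //; exact: measurable_sum.
exact: cost_integrand_bounded.
Qed.

Lemma cost_ge (E : 'I_M -> R) (u : 'I_N -> R -> R) : 0 <= T ->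
  feasible N M T alpha beta L U xhat x0 tau E u ->
  exists2 r, - (P * N%:R * T) <= r & r%:E = cost N T pi u.
Proof.
move=> T0 [u_meas [u01 _]].
have := integral_itv_ge T0 (cost_integrand_integrable u_meas u01)
  (cost_integrand_bounded u01).
by rewrite subr0.
Qed.

Lemma cost_mix (lam : R) (u1 u2 : 'I_N -> R -> R) :
  (forall i, measurable_fun `[0, T] (u1 i)) ->
  (forall i t, t \in `[0, T] -> 0 <= u1 i t <= 1) ->
  (forall i, measurable_fun `[0, T] (u2 i)) ->
  (forall i t, t \in `[0, T] -> 0 <= u2 i t <= 1) ->
  cost N T pi (fun i => mix lam (u1 i) (u2 i)) =
    (lam%:E * cost N T pi u1 + (1 - lam)%:E * cost N T pi u2)%E.
Proof.
move=> u1_meas u1_01 u2_meas u2_01; rewrite /cost -integral_lin_comb //.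
- apply: eq_integral => t _; congr EFin.
  by rewrite /mix big_split /= -!mulr_sumr; ring.
- exact: cost_integrand_integrable.
- exact: cost_integrand_integrable.
Qed.

Lemma value_convex (lam : R) (E1 E2 : 'I_M -> R) :
  0 <= T -> (forall j, (j < M)%N -> tau j.+1 \in `[0, T]) -> 0 < lam < 1 ->
  (value N M T alpha beta L U xhat x0 pi tau (mix lam E1 E2) <=
     lam%:E * value N M T alpha beta L U xhat x0 pi tau E1
     + (1 - lam)%:E * value N M T alpha beta L U xhat x0 pi tau E2)%E.
Proof.
move=> T0 tauT /[dup] lam01 /andP[lam0 lam1].
apply: (ereal_inf_convex (B := - (P * N%:R * T))) => //.
- by move=> _ [u [fu ->]]; exact: cost_ge fu.
- by move=> _ [u [fu ->]]; exact: cost_ge fu.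
move=> r1 r2 [u1 [f1 c1]] [u2 [f2 c2]].
exists (fun i => mix lam (u1 i) (u2 i)); split.
  by apply: feasible_mix => //; rewrite ltW ?ltW.
case: f1 f2 => [u1_meas [u1_01 _]] [u2_meas [u2_01 _]].
by rewrite cost_mix // -c1 -c2.
Qed.

End cost.

End control_problem.

Theorem proposition3 (R : realType) (N M : nat) (T Etot alpha beta L U xhat : R)
    (x0 : 'I_N -> R) (pi : R -> R) (tau : nat -> R) :
  (0 < N)%N -> (0 < M)%N -> 0 < T -> 0 < Etot -> 0 < alpha -> L < U ->
  U < xhat ->
  (forall i, L <= x0 i <= U) ->
  tau 0%N = 0 -> tau M = T ->
  (forall j, (j < M)%N -> tau j < tau j.+1) ->
  (forall j, (j < M)%N ->
     {in `[tau j, tau j.+1] &, {homo pi : s t / s <= t}} \/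
     {in `[tau j, tau j.+1] &, {homo pi : s t / t <= s}}) ->
  forall (lam : R) (E1 E2 : 'I_M -> R),
    0 <= lam <= 1 ->
    admissible N M Etot alpha beta L U xhat tau E1 ->
    admissible N M Etot alpha beta L U xhat tau E2 ->
    (value N M T alpha beta L U xhat x0 pi tau (fun j => (lam * E1 j + (1 - lam) * E2 j)%R)
      <= lam%:E * value N M T alpha beta L U xhat x0 pi tau E1
         + (1 - lam)%:E * value N M T alpha beta L U xhat x0 pi tau E2)%E.
Proof.
move=> _ _ T0 _ _ _ _ _ tau0 tauM tau_lt pi_piece lam E1 E2 /andP[lam0 lam1] _ _.
have tau_nd j : (j < M)%N -> tau j <= tau j.+1 by move/tau_lt/ltW.
have tau_itv j : (j < M)%N -> tau j.+1 \in `[0, T].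
  by move=> jM; rewrite -tau0 -tauM in_itv /= !(partition_le tau_nd) ?leqnn ?jM.
(* Both disjuncts of the hypothesis on [pi] say that [pi] is nondecreasing. *)
have pi_mono j : (j < M)%N -> monotonic `[tau j, tau j.+1] pi.
  move=> jM; left; case: (pi_piece j jM) => // pi_nd s t sj tj.
  exact: pi_nd t s tj sj.
have [pi_meas [P pi_bounded]] := piecewise_monotonic_measurable_bounded tau_nd pi_mono.
rewrite tau0 tauM in pi_meas pi_bounded.
have [->|lam_neq0] := eqVneq lam 0.
  have -> : (fun j => 0 * E1 j + (1 - 0) * E2 j) = E2.
    by apply/funext => j; rewrite mul0r add0r subr0 mul1r.
  by rewrite mul0e add0e subr0 mul1e.
have [->|lam_neq1] := eqVneq lam 1.
  have -> : (fun j => 1 * E1 j + (1 - 1) * E2 j) = E1.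
    by apply/funext => j; rewrite mul1r subrr mul0r addr0.
  by rewrite subrr mul0e adde0 mul1e.
have lam01 : 0 < lam < 1 by rewrite !lt_neqAle eq_sym lam_neq0 lam_neq1 lam0 lam1.
exact: (value_convex alpha beta L U xhat x0 pi_meas pi_bounded E1 E2 (ltW T0)
  tau_itv lam01).
Qed.
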